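(* Let $n\ge 2k+1$, $k\ge1$, and let $U=(u_0,u_1,\dots,u_i)$ be a path in $J(n;k,k+1)$. Then: (i) if $i=3$, there is exactly one cycle of length $6$ in $J(n;k,k+1)$ containing $U$; (ii) if $i=2$ and $u_2\in V_1$, there are exactly $n-k-1$ cycles of length $6$ containing $U$; (iii) if $i=2$ and $u_2\in V_2$, there are exactly $k$ cycles of length $6$ containing $U$; (iv) if $i=1$, there are exactly $k(n-k-1)$ cycles of length $6$ containing $U$.
   Context: The doubled Johnson graph $J(n;k,k+1)$ is the bipartite graph with vertex set $V_1\cup V_2$, where $V_1=\binom{[n]}{k}$ and $V_2=\binom{[n]}{k+1}$ are the sets of $k$-subsets and $(k+1)$-subsets of $[n]=\{1,\dots,n\}$, and two vertices $u,v$ are adjacent iff $u\subset v$ or $v\subset u$. A path $(u_0,\dots,u_i)$ is a sequence of distinct vertices with consecutive ones adjacent; a cycle contains the path if it contains all its vertices and edges. *)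

From mathcomp Require Import all_boot.
Set Implicit Arguments. Unset Strict Implicit. Unset Printing Implicit Defensive.

Definition inV1 (n k : nat) (u : {set 'I_n}) : bool := #|u| == k.
Definition inV2 (n k : nat) (u : {set 'I_n}) : bool := #|u| == k.+1.
Definition jvert (n k : nat) (u : {set 'I_n}) : bool := inV1 k u || inV2 k u.

Definition jadj (n k : nat) : rel {set 'I_n} := fun u v =>
  (inV1 k u && inV2 k v && (u \subset v)) || (inV2 k u && inV1 k v && (v \subset u)).

Definition jpath (n k : nat) (p : seq {set 'I_n}) : bool :=
  match p with
  | [::] => false
  | x :: s => [&& all (@jvert n k) p, uniq p & path (@jadj n k) x s]
  end.

Definition path_edges (n : nat) (p : seq {set 'I_n}) : {set {set {set 'I_n}}} :=
  [set:: [seq [set e.1; e.2] | e <- zip p (behead p)]].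

Definition cycle_edges (n : nat) (c : seq {set 'I_n}) : {set {set {set 'I_n}}} :=
  match c with
  | [::] => set0
  | x :: _ => path_edges (rcons c x)
  end.

(* A cycle of length 6 in J(n;k,k+1), identified with its edge set E (so
   rotations/reflections of the vertex sequence give the same cycle), which
   contains the path U (all its vertices and all its edges). *)
Definition six_cycle_containing (n k : nat) (U : seq {set 'I_n})
    (E : {set {set {set 'I_n}}}) : bool :=
  [exists c : 6.-tuple {set 'I_n},
    [&& all (@jvert n k) c, uniq c, cycle (@jadj n k) c,
        E == cycle_edges c,
        all (fun u => u \in c) U & path_edges U \subset E]].

Definition num_six_cycles (n k : nat) (U : seq {set 'I_n}) : nat :=
  #|[set E | six_cycle_containing k U E]|.

From mathcomp Require Import all_boot zify.
Set Implicit Arguments. Unset Strict Implicit. Unset Printing Implicit Defensive.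

(* A 6-cycle alternates between three k-sets and three (k+1)-sets, forming a
   "hexagon" A1 ⊂ B1 ⊃ A2 ⊂ B2 ⊃ A3 ⊂ B3 ⊃ A1.  Its vertices all lie in the
   interval [S, T] of the subset lattice, where S = A1 ∩ A2 has k-1 and
   T = B1 ∪ B2 has k+2 elements, and the k- and (k+1)-sets of [S, T] are
   exactly its six vertices; so its edges are all the edges inside [S, T].
   Conversely every such interval is spanned by a hexagon (add to S one or
   two of the three points of T \ S), and the edges inside [S, T] determine
   S and T.  Hence the 6-cycles containing a path U correspond to the pairs
   S ⊆ ∩U, ∪U ⊆ T with |S| = k-1, |T| = k+2, and there are
   C(|∩U|, k-1) · C(n - |∪U|, n-k-2) of them.  The proposition follows by
   computing |∩U| and |∪U| for paths on 2, 3 and 4 vertices. *)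

Section FinsetFacts.
Variable D : finType.
Implicit Types X Y : {set D}.

Lemma eq_of_subset_card X Y : X \subset Y -> #|Y| <= #|X| -> X = Y.
Proof. by move=> sXY leYX; apply/eqP; rewrite eqEcard sXY. Qed.

Lemma setU_of_subsets X X' Y m : X \subset Y -> X' \subset Y ->
  #|X| = m -> #|X'| = m -> #|Y| = m.+1 -> X != X' -> X :|: X' = Y.
Proof.
move=> sXY sX'Y cX cX' cY neqXX'; apply: eq_of_subset_card; first by rewrite subUset sXY.
have notX'X : ~~ (X' \subset X).
  by move: neqXX'; apply: contra => sX'X; rewrite eq_sym eqEcard sX'X cX cX' leqnn.
have : X \proper X :|: X' by rewrite properE subsetUl subUset subxx.
by move/proper_card; rewrite cX cY.
Qed.

Lemma setI_of_supsets X Y Y' m : X \subset Y -> X \subset Y' ->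
  #|X| = m -> #|Y| = m.+1 -> #|Y'| = m.+1 -> Y != Y' -> Y :&: Y' = X.
Proof.
move=> sXY sXY' cX cY cY' neqYY'; apply/esym/eq_of_subset_card; first by rewrite subsetI sXY.
have notYY' : ~~ (Y \subset Y').
  by move: neqYY'; apply: contra => sYY'; rewrite eqEcard sYY' cY cY' leqnn.
have : Y :&: Y' \proper Y by rewrite properE subsetIl subsetI subxx.
by move/proper_card; rewrite cX cY.
Qed.

Lemma card_setI_of_subsets X X' Y m : X \subset Y -> X' \subset Y ->
  #|X| = m -> #|X'| = m -> #|Y| = m.+1 -> X != X' -> #|X :&: X'| = m.-1.
Proof.
move=> sXY sX'Y cX cX' cY neqXX'; have := cardsUI X X'.
by rewrite (setU_of_subsets sXY sX'Y cX cX' cY neqXX') cX cX' cY; lia.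
Qed.

Lemma card_setU_of_supsets X Y Y' m : X \subset Y -> X \subset Y' ->
  #|X| = m -> #|Y| = m.+1 -> #|Y'| = m.+1 -> Y != Y' -> #|Y :|: Y'| = m.+2.
Proof.
move=> sXY sXY' cX cY cY' neqYY'; have := cardsUI Y Y'.
by rewrite (setI_of_supsets sXY sXY' cX cY cY' neqYY') cX cY cY'; lia.
Qed.

(* Supersets of B of size m correspond, by complementation, to the subsets
   of the complement of B of size #|D| - m. *)
Lemma card_supsets (B : {set D}) m : m <= #|D| ->
  #|[set A : {set D} | B \subset A & #|A| == m]| = 'C(#|D| - #|B|, #|D| - m).
Proof.
move=> le_mD; have cardC (A : {set D}) : #|~: A| = #|D| - #|A|.
  by have := cardsC A; lia.
have -> : [set A : {set D} | B \subset A & #|A| == m] =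
          (@setC D) @: [set A : {set D} | A \subset ~: B & #|A| == #|D| - m].
  apply/setP => A; rewrite inE; apply/andP/imsetP => [[sBA /eqP cA] | [C]].
    by exists (~: A); rewrite ?setCK // inE setCS sBA cardC cA eqxx.
  rewrite inE => /andP [sCB /eqP cC] ->; rewrite -setCS setCK sCB cardC cC.
  by have := max_card C; lia.
by rewrite card_imset ?cards_draws ?cardC //; exact: setC_inj.
Qed.

End FinsetFacts.

Definition between (D : finType) (S T X : {set D}) : bool :=
  (S \subset X) && (X \subset T).

Definition interval_edges (D : finType) (k : nat) (S T : {set D}) :
    {set {set {set D}}} :=
  [set e | [exists X, exists Y, [&& e == [set X; Y], between S T X,
     between S T Y, X \subset Y, #|X| == k & #|Y| == k.+1]]].

Section IntervalEdges.
Variables (D : finType) (k : nat) (S T : {set D}).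

Lemma interval_edgeP (X Y : {set D}) : between S T X -> between S T Y ->
  X \subset Y -> #|X| = k -> #|Y| = k.+1 -> [set X; Y] \in interval_edges k S T.
Proof.
move=> bX bY sXY cX cY; rewrite inE; apply/existsP; exists X; apply/existsP; exists Y.
by rewrite eqxx bX bY sXY cX cY !eqxx.
Qed.

Lemma interval_edges_between e Z :
  e \in interval_edges k S T -> Z \in e -> between S T Z.
Proof.
rewrite inE => /existsP [X /existsP [Y /and3P [/eqP -> bX /andP [bY _]]]].
by case/set2P => ->.
Qed.

End IntervalEdges.

Record hexagon (D : finType) (k : nat) (A1 B1 A2 B2 A3 B3 : {set D}) : Prop :=
  Hexagon {
    card_A1 : #|A1| = k;  card_A2 : #|A2| = k;  card_A3 : #|A3| = k;
    card_B1 : #|B1| = k.+1;  card_B2 : #|B2| = k.+1;  card_B3 : #|B3| = k.+1;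
    sub_A1B1 : A1 \subset B1;  sub_A2B1 : A2 \subset B1;
    sub_A2B2 : A2 \subset B2;  sub_A3B2 : A3 \subset B2;
    sub_A3B3 : A3 \subset B3;  sub_A1B3 : A1 \subset B3;
    neq_A12 : A1 != A2;  neq_A23 : A2 != A3;  neq_A31 : A3 != A1;
    neq_B12 : B1 != B2;  neq_B23 : B2 != B3;  neq_B31 : B3 != B1 }.

Section Hexagon.
Variables (D : finType) (k : nat) (A1 B1 A2 B2 A3 B3 : {set D}).
Hypothesis hex : hexagon k A1 B1 A2 B2 A3 B3.

Let cA1 := card_A1 hex.  Let cA2 := card_A2 hex.  Let cA3 := card_A3 hex.
Let cB1 := card_B1 hex.  Let cB2 := card_B2 hex.  Let cB3 := card_B3 hex.
Let sA1B1 := sub_A1B1 hex.  Let sA2B1 := sub_A2B1 hex.  Let sA2B2 := sub_A2B2 hex.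
Let sA3B2 := sub_A3B2 hex.  Let sA3B3 := sub_A3B3 hex.  Let sA1B3 := sub_A1B3 hex.

Local Notation S := (A1 :&: A2).
Local Notation T := (B1 :|: B2).

Definition hex_verts := [:: A1; B1; A2; B2; A3; B3].
Definition hex_edges :=
  [:: [set A1; B1]; [set A2; B1]; [set A2; B2]; [set A3; B2]; [set A3; B3]; [set A1; B3]].

Lemma hex_unions : [/\ A1 :|: A2 = B1, A2 :|: A3 = B2 & A3 :|: A1 = B3].
Proof.
split; apply: setU_of_subsets; eauto;
  [exact: neq_A12 hex | exact: neq_A23 hex | exact: neq_A31 hex].
Qed.

Lemma hex_meets : [/\ B3 :&: B1 = A1, B1 :&: B2 = A2 & B2 :&: B3 = A3].
Proof.
split; apply: setI_of_supsets; eauto;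
  [exact: neq_B31 hex | exact: neq_B12 hex | exact: neq_B23 hex].
Qed.

Lemma card_hex_bot : #|S| = k.-1.
Proof. exact: card_setI_of_subsets sA1B1 sA2B1 cA1 cA2 cB1 (neq_A12 hex). Qed.

Lemma card_hex_top : #|T| = k.+2.
Proof. exact: card_setU_of_supsets sA2B1 sA2B2 cA2 cB1 cB2 (neq_B12 hex). Qed.

Lemma hex_k_gt0 : 0 < k.
Proof. by have := cardsUI A1 A2; case: hex_unions => -> _ _; rewrite cA1 cA2 cB1; lia. Qed.

Lemma hex_bot_sub_A3 : S \subset A3.
Proof.
case: hex_meets => _ _ <-; rewrite subsetI.
by rewrite (subset_trans (subsetIr _ _) sA2B2) (subset_trans (subsetIl _ _) sA1B3).
Qed.

Lemma hex_B3_sub_top : B3 \subset T.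
Proof.
case: hex_unions => _ _ <-; rewrite subUset.
by rewrite (subset_trans sA3B2 (subsetUr _ _)) (subset_trans sA1B1 (subsetUl _ _)).
Qed.

Lemma hex_verts_between : all (between S T) hex_verts.
Proof.
have SA1 : S \subset A1 := subsetIl _ _.
have SA2 : S \subset A2 := subsetIr _ _.
have B1T : B1 \subset T := subsetUl _ _.
have B2T : B2 \subset T := subsetUr _ _.
rewrite /= /between SA1 SA2 hex_bot_sub_A3 B1T B2T hex_B3_sub_top.
rewrite (subset_trans sA1B1 B1T) (subset_trans sA2B1 B1T) (subset_trans sA3B2 B2T).
rewrite (subset_trans SA1 sA1B1) (subset_trans SA2 sA2B2).
by rewrite (subset_trans hex_bot_sub_A3 sA3B3).
Qed.

(* The k-sets of [S, T] are A1, A2, A3: such a set is S plus one point x of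
   T = A1 ∪ A2 ∪ A3, and so is the A containing x. *)
Lemma hex_between_k X : between S T X -> #|X| = k -> X \in [:: A1; A2; A3].
Proof.
move=> /andP [SX XT] cX.
have [x xX xNS] : exists2 x, x \in X & x \notin S.
  apply/subsetPn/negP => /subset_leq_card.
  by rewrite cX card_hex_bot; have := hex_k_gt0; lia.
have cxS : #|x |: S| = k by rewrite cardsU1 xNS card_hex_bot; have := hex_k_gt0; lia.
have onlyA (Y : {set D}) : S \subset Y -> x \in Y -> #|Y| = k -> Y = x |: S.
  move=> SY xY cY; apply/esym/eq_of_subset_card; last by rewrite cY cxS.
  by rewrite subUset sub1set xY SY.
rewrite (onlyA X SX xX cX); have := subsetP XT x xX.
case: hex_unions => <- <- _; rewrite !inE -!orbA => /or4P [] xA.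
- by rewrite -(onlyA A1 (subsetIl _ _) xA cA1) eqxx.
- by rewrite -(onlyA A2 (subsetIr _ _) xA cA2) eqxx orbT.
- by rewrite -(onlyA A2 (subsetIr _ _) xA cA2) eqxx orbT.
- by rewrite -(onlyA A3 hex_bot_sub_A3 xA cA3) eqxx !orbT.
Qed.

(* Dually, the (k+1)-sets of [S, T] are B1, B2, B3: such a set is T minus
   one point y outside S = B1 ∩ B2 ∩ B3, and so is the B missing y. *)
Lemma hex_between_k1 X : between S T X -> #|X| = k.+1 -> X \in [:: B1; B2; B3].
Proof.
move=> /andP [SX XT] cX.
have [y yT yNX] : exists2 y, y \in T & y \notin X.
  by apply/subsetPn/negP => /subset_leq_card; rewrite cX card_hex_top; lia.
have cTy : #|T :\ y| = k.+1 by have := cardsD1 y T; rewrite yT card_hex_top; lia.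
have onlyB (Y : {set D}) : Y \subset T -> y \notin Y -> #|Y| = k.+1 -> Y = T :\ y.
  move=> YT yNY cY; apply: eq_of_subset_card; last by rewrite cY cTy.
  by rewrite subsetD1 YT yNY.
have yNS : y \notin S by move: yNX; apply: contra; apply: (subsetP SX).
rewrite (onlyB X XT yNX cX); move: yNS.
case: hex_meets => <- <- _; rewrite !inE !negb_and -!orbA => /or4P [] yNB.
- by rewrite -(onlyB B3 hex_B3_sub_top yNB cB3) eqxx !orbT.
- by rewrite -(onlyB B1 (subsetUl _ _) yNB cB1) eqxx.
- by rewrite -(onlyB B1 (subsetUl _ _) yNB cB1) eqxx.
- by rewrite -(onlyB B2 (subsetUr _ _) yNB cB2) eqxx orbT.
Qed.

Lemma hex_sub_edge X Y : X \in [:: A1; A2; A3] -> Y \in [:: B1; B2; B3] ->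
  X \subset Y -> [set X; Y] \in hex_edges.
Proof.
have [eA1 eA2 _] := hex_meets.
have inside_meet (A A' B B' : {set D}) : A \subset B -> A \subset B' ->
    B :&: B' = A' -> #|A| = #|A'| -> A = A'.
  move=> AB AB' <- cAA'; apply: eq_of_subset_card; first by rewrite subsetI AB.
  by rewrite cAA'.
rewrite !inE => /or3P [] /eqP -> /or3P [] /eqP -> XY; rewrite /hex_edges ?inE ?eqxx ?orbT //.
- by case/negP: (neq_A12 hex); apply/eqP/(inside_meet _ _ B1 B2); rewrite ?cA1 ?cA2.
- by case/negP: (neq_A12 hex); apply/eqP/esym/(inside_meet _ _ B3 B1); rewrite ?cA1 ?cA2.
- by case/negP: (neq_A23 hex); apply/eqP/esym/(inside_meet _ _ B1 B2); rewrite ?cA3 ?cA2.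
Qed.

Lemma hex_interval_edges e : (e \in interval_edges k S T) = (e \in hex_edges).
Proof.
apply/idP/idP.
  rewrite inE => /existsP [X /existsP [Y /and5P [/eqP -> bX bY XY /andP [/eqP cX /eqP cY]]]].
  exact: hex_sub_edge (hex_between_k bX cX) (hex_between_k1 bY cY) XY.
have /= /and5P [bA1 bB1 bA2 bB2 /and3P [bA3 bB3 _]] := hex_verts_between.
have edges_in : all (mem (interval_edges k S T)) hex_edges.
  rewrite /= (interval_edgeP bA1 bB1) // (interval_edgeP bA2 bB1) //.
  rewrite (interval_edgeP bA2 bB2) // (interval_edgeP bA3 bB2) //.
  by rewrite (interval_edgeP bA3 bB3) // (interval_edgeP bA1 bB3).
exact: (allP edges_in).
Qed.

End Hexagon.

Section IntervalHexagon.
Variables (D : finType) (k : nat).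
Implicit Types S T : {set D}.

Lemma hexagon_of_triple S (a b c : D) : 0 < k -> #|S| = k.-1 ->
  a != b -> b != c -> c != a -> a \notin S -> b \notin S -> c \notin S ->
  hexagon k (a |: S) (a |: (b |: S)) (b |: S) (b |: (c |: S)) (c |: S) (c |: (a |: S)).
Proof.
move=> k_gt0 cS ab bc ca aS bS cS'.
have card1 x : x \notin S -> #|x |: S| = k by move=> xS; rewrite cardsU1 xS cS; lia.
have card2 x y : x != y -> x \notin S -> y \notin S -> #|x |: (y |: S)| = k.+1.
  by move=> xy xS yS; rewrite cardsU1 in_setU1 negb_or xy xS card1.
have notin2 x y (Y : {set D}) : x != y -> x \notin Y -> x \notin y |: Y.
  by move=> xy xY; rewrite in_setU1 negb_or xy.
have neq_by x (X Y : {set D}) : x \in X -> x \notin Y -> X != Y.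
  by move=> xX; apply: contra => /eqP <-.
have [ba cb ac] : [/\ b != a, c != b & a != c] by split; rewrite eq_sym.
split; rewrite ?card1 ?card2 ?setUS ?subsetU1 //.
- exact: neq_by (setU11 a S) (notin2 _ _ _ ab aS).
- exact: neq_by (setU11 b S) (notin2 _ _ _ bc bS).
- exact: neq_by (setU11 c S) (notin2 _ _ _ ca cS').
- exact: neq_by (setU11 a _) (notin2 _ _ _ ab (notin2 _ _ _ ac aS)).
- exact: neq_by (setU11 b _) (notin2 _ _ _ bc (notin2 _ _ _ ba bS)).
- exact: neq_by (setU11 c _) (notin2 _ _ _ ca (notin2 _ _ _ cb cS')).
Qed.

(* Every interval [S, T] with |S| = k-1 and |T| = k+2 is spanned by a
   hexagon, built from the three points of T \ S. *)
Lemma hexagon_of_interval S T : 0 < k -> S \subset T -> #|S| = k.-1 -> #|T| = k.+2 ->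
  exists A1 B1 A2 B2 A3 B3,
    [/\ hexagon k A1 B1 A2 B2 A3 B3, A1 :&: A2 = S & B1 :|: B2 = T].
Proof.
move=> k_gt0 ST cS cT.
have : 2 < #|T :\: S| by rewrite cardsDS // cT cS; lia.
case/card_gt2P => a [b [c [[aTS bTS cTS] [ab bc ca]]]].
move: aTS bTS cTS; rewrite !inE => /andP [aS aT] /andP [bS bT] /andP [cS' cT'].
have hex := hexagon_of_triple k_gt0 cS ab bc ca aS bS cS'.
do 6!eexists; split; first exact: hex.
- apply/esym/eq_of_subset_card; first by rewrite subsetI !subsetU1.
  by rewrite (card_hex_bot hex) cS.
- apply: eq_of_subset_card; first by rewrite !subUset !sub1set aT bT cT' ST.
  by rewrite (card_hex_top hex) cT.
Qed.

(* The edge set of an interval [S, T] determines S and T: S is the meet and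
   T the join of the two k-sets and two (k+1)-sets of a path A1 B1 A2 B2. *)
Lemma interval_edges_inj S T S' T' : 0 < k -> S \subset T ->
  #|S| = k.-1 -> #|T| = k.+2 -> #|S'| = k.-1 -> #|T'| = k.+2 ->
  interval_edges k S T = interval_edges k S' T' -> S = S' /\ T = T'.
Proof.
move=> k_gt0 ST cS cT cS' cT' eqF.
have [A1 [B1 [A2 [B2 [A3 [B3 [hex eS eT]]]]]]] := hexagon_of_interval k_gt0 ST cS cT.
rewrite -eS -eT in eqF *.
have hex_edge_between X Y : [set X; Y] \in hex_edges A1 B1 A2 B2 A3 B3 ->
    between S' T' X /\ between S' T' Y.
  rewrite -(hex_interval_edges hex) eqF => eF.
  by split; apply: interval_edges_between eF _; rewrite !inE eqxx ?orbT.
have [/andP [SA1 _] /andP [_ B1T]] := hex_edge_between A1 B1 (mem_head _ _).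
have [/andP [SA2 _] /andP [_ B2T]] : between S' T' A2 /\ between S' T' B2.
  by apply: hex_edge_between; rewrite !inE eqxx !orbT.
split.
- apply/esym/eq_of_subset_card; first by rewrite subsetI SA1.
  by rewrite (card_hex_bot hex) cS'.
- apply: eq_of_subset_card; first by rewrite subUset B1T.
  by rewrite (card_hex_top hex) cT'.
Qed.

End IntervalHexagon.

Section DoubledJohnsonGraph.
Variables n k : nat.
Implicit Types (x y S T : {set 'I_n}) (U : seq {set 'I_n}).

Lemma jadj_sym x y : jadj k x y = jadj k y x.
Proof. by rewrite /jadj orbC (andbC (inV2 k y)) (andbC (inV1 k y)). Qed.

Lemma V1_notV2 x : inV1 k x -> ~~ inV2 k x.
Proof. by rewrite /inV1 /inV2 => /eqP ->; rewrite eqn_leq ltnn andbF. Qed.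

Lemma jadj_V1 x y : inV1 k x -> jadj k x y -> inV2 k y && (x \subset y).
Proof. by move=> x1; rewrite /jadj x1 (negbTE (V1_notV2 x1)) orbF. Qed.

Lemma jadj_V2 x y : inV2 k x -> jadj k x y -> inV1 k y && (y \subset x).
Proof.
move=> x2; have x1F : inV1 k x = false by apply: contraTF x2 => /V1_notV2.
by rewrite /jadj x1F x2.
Qed.

Lemma jadj_up x y : #|x| = k -> #|y| = k.+1 -> x \subset y -> jadj k x y.
Proof. by move=> cx cy xy; rewrite /jadj /inV1 /inV2 cx cy xy !eqxx. Qed.

Lemma jadj_interval_edge S T x y : jadj k x y ->
  between S T x -> between S T y -> [set x; y] \in interval_edges k S T.
Proof.
case/orP => /andP [/andP [/eqP cx /eqP cy] sxy] bx b_y.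
  exact: interval_edgeP.
by rewrite setUC; apply: interval_edgeP.
Qed.

Lemma path_edges_interval S T x p : path (jadj k) x p ->
  all (between S T) (x :: p) -> path_edges (x :: p) \subset interval_edges k S T.
Proof.
elim: p x => [|y p IHp] x /=.
  by move=> _ _; apply/subsetP => e; rewrite inE.
move=> /andP [xy yp] /and3P [bx b_y bp]; apply/subsetP => e.
rewrite /path_edges /= inE in_cons => /orP [/eqP -> | ep].
  exact: jadj_interval_edge.
by apply: (subsetP (IHp y yp _)); rewrite /= ?b_y // /path_edges inE.
Qed.

Lemma cycle6_edges (v0 v1 v2 v3 v4 v5 : {set 'I_n}) :
  cycle_edges [:: v0; v1; v2; v3; v4; v5] =i
  [:: [set v0; v1]; [set v1; v2]; [set v2; v3]; [set v3; v4]; [set v4; v5]; [set v5; v0]].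
Proof. by move=> e; rewrite /cycle_edges /path_edges /= inE. Qed.

Lemma hexagon_of_alternating (v0 v1 v2 v3 v4 v5 : {set 'I_n}) : inV1 k v0 ->
  uniq [:: v0; v1; v2; v3; v4; v5] -> cycle (jadj k) [:: v0; v1; v2; v3; v4; v5] ->
  hexagon k v0 v1 v2 v3 v4 v5.
Proof.
rewrite /= !inE !negb_or !andbT => h0.
move=> /and5P [/and5P [_ d02 _ d04 _] /and4P [_ d13 _ d15] /and3P [_ d24 _] /andP [_ d35] _].
move=> /and5P [a01 a12 a23 a34 /andP [a45 a50]].
case/andP: (jadj_V1 h0 a01) => h1 s01.
case/andP: (jadj_V2 h1 a12) => h2 s21.
case/andP: (jadj_V1 h2 a23) => h3 s23.
case/andP: (jadj_V2 h3 a34) => h4 s43.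
case/andP: (jadj_V1 h4 a45) => h5 s45.
case/andP: (jadj_V2 h5 a50) => _ s05.
by split; rewrite // 1?(eq_sym v4) 1?(eq_sym v5) //; apply/eqP.
Qed.

Lemma hexagon_is_cycle (A1 B1 A2 B2 A3 B3 : {set 'I_n}) :
  hexagon k A1 B1 A2 B2 A3 B3 ->
  let c := hex_verts A1 B1 A2 B2 A3 B3 in
  [&& all (jvert k) c, uniq c & cycle (jadj k) c].
Proof.
case=> cA1 cA2 cA3 cB1 cB2 cB3 sA1B1 sA2B1 sA2B2 sA3B2 sA3B3 sA1B3 nA12 nA23 nA31 nB12 nB23 nB31.
apply/and3P; split.
- by rewrite /= /jvert /inV1 /inV2 cA1 cA2 cA3 cB1 cB2 cB3 !eqxx ?orbT.
- (* A's and B's differ by cardinality, and among themselves by hypothesis. *)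
  have neq_of_card (X Y : {set 'I_n}) : #|X| != #|Y| -> X != Y.
    by apply: contraNneq => ->.
  rewrite /= !inE !negb_or !andbT; do !(apply/andP; split);
    first [done | by rewrite eq_sym | apply: neq_of_card];
    by rewrite ?cA1 ?cA2 ?cA3 ?cB1 ?cB2 ?cB3 eqn_leq ltnn ?andbF.
- rewrite /hex_verts /= (jadj_up cA1 cB1) // (jadj_sym B1) (jadj_up cA2 cB1) //.
  rewrite (jadj_up cA2 cB2) // (jadj_sym B2) (jadj_up cA3 cB2) //.
  by rewrite (jadj_up cA3 cB3) // (jadj_sym B3) (jadj_up cA1 cB3).
Qed.

Lemma cycle_interval (c : 6.-tuple {set 'I_n}) :
  all (jvert k) c -> uniq c -> cycle (jadj k) c ->
  exists S T, [/\ #|S| = k.-1, #|T| = k.+2,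
                  cycle_edges c =i interval_edges k S T & all (between S T) c].
Proof.
case: c => [[|v0 [|v1 [|v2 [|v3 [|v4 [|v5 [|]]]]]]]] // ?.
move=> /andP [/orP [v0_1 | v0_2] _] uc cc.
  have hex := hexagon_of_alternating v0_1 uc cc.
  exists (v0 :&: v2), (v1 :|: v3); split; [exact: card_hex_bot hex | exact: card_hex_top hex | |].
    move=> e; rewrite cycle6_edges (hex_interval_edges hex) /hex_edges.
    by rewrite (setUC [set v1]) (setUC [set v3]) (setUC [set v5]).
  exact: hex_verts_between hex.
(* Starting from a (k+1)-set, rotate the cycle by one step. *)
have [v1_1 _] := andP (jadj_V2 v0_2 (andP cc).1).
have hex : hexagon k v1 v2 v3 v4 v5 v0.
  apply: hexagon_of_alternating v1_1 _ _.
  - by rewrite -(rot_uniq 1) in uc.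
  - by rewrite -(rot_cycle 1) in cc.
exists (v1 :&: v3), (v2 :|: v4); split; [exact: card_hex_bot hex | exact: card_hex_top hex | |].
  move=> e; rewrite cycle6_edges (hex_interval_edges hex) -(mem_rot 1) /hex_edges.
  by rewrite (setUC [set v0]) (setUC [set v2]) (setUC [set v4]).
by apply/allP => X; rewrite -(mem_rot 1); exact: (allP (hex_verts_between hex)).
Qed.

Lemma interval_cycle S T : 0 < k -> S \subset T -> #|S| = k.-1 -> #|T| = k.+2 ->
  exists c : 6.-tuple {set 'I_n},
    [/\ all (jvert k) c, uniq c, cycle (jadj k) c,
        cycle_edges c =i interval_edges k S T &
        forall X, jvert k X -> between S T X -> X \in c].
Proof.
move=> k_gt0 ST cS cT.
have [A1 [B1 [A2 [B2 [A3 [B3 [hex <- <-]]]]]]] := hexagon_of_interval k_gt0 ST cS cT.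
have /and3P [jc uc cc] := hexagon_is_cycle hex.
exists [tuple A1; B1; A2; B2; A3; B3]; split => //.
  move=> e; rewrite cycle6_edges (hex_interval_edges hex) /hex_edges.
  by rewrite (setUC [set B1]) (setUC [set B2]) (setUC [set B3]).
move=> X /orP [/eqP cX | /eqP cX] bX.
  by move: (hex_between_k hex bX cX); rewrite !inE => /or3P [] ->; rewrite ?orbT.
by move: (hex_between_k1 hex bX cX); rewrite !inE => /or3P [] ->; rewrite ?orbT.
Qed.

Definition interval_pairs U : {set {set 'I_n} * {set 'I_n}} :=
  [set p : {set 'I_n} * {set 'I_n} |
     [&& #|p.1| == k.-1, #|p.2| == k.+2 & all (between p.1 p.2) U]].

Lemma interval_pairs_sub u U p : p \in interval_pairs (u :: U) -> p.1 \subset p.2.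
Proof. by rewrite inE => /and3P [_ _ /andP [/andP [Su uT] _]]; apply: subset_trans uT. Qed.

Lemma six_cycles_intervals U : 0 < k -> jpath k U ->
  [set E | six_cycle_containing k U E] =
  [set interval_edges k p.1 p.2 | p in interval_pairs U].
Proof.
move=> k_gt0 hU; apply/setP => E; rewrite inE; apply/idP/imsetP.
  case/existsP => c /and5P [jc uc cc /eqP -> /andP [Uc _]].
  have [S [T [cS cT edges_c bc]]] := cycle_interval jc uc cc.
  exists (S, T); last by apply/setP => e; rewrite edges_c.
  rewrite inE /= cS cT !eqxx; apply/allP => u /(allP Uc); exact: (allP bc).
case: U hU => [|u U] // hU [[S T] pST ->].
have ST : S \subset T := interval_pairs_sub pST.
move: pST; rewrite inE => /and3P [/eqP cS /eqP cT bU].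
have [c [jc uc cc edges_c inc]] := interval_cycle k_gt0 ST cS cT.
case/and3P: hU => jU _ pU.
apply/existsP; exists c; rewrite jc uc cc !andTb; apply/and3P; split.
- by apply/eqP/setP => e; rewrite edges_c.
- by apply/allP => X XU; apply: (inc X); [exact: (allP jU) | exact: (allP bU)].
- exact: path_edges_interval pU bU.
Qed.

(* Since the edge set determines the interval, the 6-cycles through U are
   counted by interval_pairs U. *)
Lemma num_six_cycles_pairs U : 0 < k -> jpath k U ->
  num_six_cycles k U = #|interval_pairs U|.
Proof.
move=> k_gt0 hU; rewrite /num_six_cycles six_cycles_intervals // card_in_imset //.
case: U hU => [|u U] // _ [S T] [S' T'] pST pST' eqF.
have ST : S \subset T := interval_pairs_sub pST.
move: pST pST'; rewrite !inE /= => /and3P [/eqP cS /eqP cT _] /and3P [/eqP cS' /eqP cT' _].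
by have [-> ->] := interval_edges_inj k_gt0 ST cS cT cS' cT' eqF.
Qed.

Definition meet_all U : {set 'I_n} := \bigcap_(u <- U) u.
Definition join_all U : {set 'I_n} := \bigcup_(u <- U) u.

Lemma all_between S T U :
  all (between S T) U = (S \subset meet_all U) && (join_all U \subset T).
Proof.
rewrite /meet_all /join_all; elim: U => [|u U IHU] /=.
  by rewrite !big_nil subsetT sub0set.
rewrite !big_cons IHU subsetI subUset /between.
by case: (S \subset u); case: (u \subset T); case: (S \subset _); case: (_ \subset T).
Qed.

(* Choosing S inside the meet and T around the join independently gives the
   count C(|meet U|, k-1) * C(n - |join U|, n - (k+2)). *)
Lemma card_interval_pairs U : k.+2 <= n ->
  #|interval_pairs U| =
  'C(#|meet_all U|, k.-1) * 'C(n - #|join_all U|, n - k.+2).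
Proof.
move=> le_k2n.
have -> : interval_pairs U =
    setX [set S : {set 'I_n} | S \subset meet_all U & #|S| == k.-1]
         [set T : {set 'I_n} | join_all U \subset T & #|T| == k.+2].
  apply/setP => -[S T]; rewrite !inE /= all_between.
  by case: (S \subset _); case: (_ \subset T); case: (#|S| == _); case: (#|T| == _).
by rewrite cardsX cards_draws card_supsets card_ord.
Qed.

End DoubledJohnsonGraph.

Section PathSpans.
Variables n k : nat.
Implicit Types u : {set 'I_n}.

(* An edge x ⊂ y has meet x (of size k) and join y (of size k+1). *)
Lemma path2_span u0 u1 : jpath k [:: u0; u1] ->
  #|meet_all [:: u0; u1]| = k /\ #|join_all [:: u0; u1]| = k.+1.
Proof.
rewrite /jpath /meet_all /join_all !big_cons !big_nil setIT setU0 /=.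
case/and3P => /andP [/orP [u0_1 | u0_2] _] _ /andP [a01 _].
  case/andP: (jadj_V1 u0_1 a01) => /eqP u1_2 s01.
  by rewrite (setIidPl s01) (setUidPr s01) (eqP u0_1).
case/andP: (jadj_V2 u0_2 a01) => /eqP u1_1 s10.
by rewrite (setIidPr s10) (setUidPl s10) (eqP u0_2).
Qed.

(* A path x ⊂ y ⊃ z of two k-sets: meet x ∩ z of size k-1, join y. *)
Lemma path3_V1_span u0 u1 u2 : jpath k [:: u0; u1; u2] -> inV1 k u2 ->
  #|meet_all [:: u0; u1; u2]| = k.-1 /\ #|join_all [:: u0; u1; u2]| = k.+1.
Proof.
rewrite /jpath /meet_all /join_all !big_cons !big_nil setIT setU0 /= !inE !negb_or.
case/and3P => _ /andP [/andP [_ d02] _] /and3P [a01 a12 _] u2_1.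
rewrite jadj_sym in a12; case/andP: (jadj_V1 u2_1 a12) => u1_2 s21.
rewrite jadj_sym in a01; case/andP: (jadj_V2 u1_2 a01) => /eqP u0_1 s01.
rewrite (setIidPr s21) (setUidPl s21) (setUidPr s01) (eqP u1_2); split=> //.
exact: card_setI_of_subsets s01 s21 u0_1 (eqP u2_1) (eqP u1_2) d02.
Qed.

(* A path y ⊃ x ⊂ z of two (k+1)-sets: meet x, join y ∪ z of size k+2. *)
Lemma path3_V2_span u0 u1 u2 : jpath k [:: u0; u1; u2] -> inV2 k u2 ->
  #|meet_all [:: u0; u1; u2]| = k /\ #|join_all [:: u0; u1; u2]| = k.+2.
Proof.
rewrite /jpath /meet_all /join_all !big_cons !big_nil setIT setU0 /= !inE !negb_or.
case/and3P => _ /andP [/andP [_ d02] _] /and3P [a01 a12 _] u2_2.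
rewrite jadj_sym in a12; case/andP: (jadj_V2 u2_2 a12) => u1_1 s12.
rewrite jadj_sym in a01; case/andP: (jadj_V1 u1_1 a01) => /eqP u0_2 s10.
rewrite (setIidPl s12) (setIidPr s10) (setUidPr s12) (eqP u1_1); split=> //.
exact: card_setU_of_supsets s10 s12 (eqP u1_1) u0_2 (eqP u2_2) d02.
Qed.

(* A path on four vertices contains two k-sets and two (k+1)-sets: its
   meet is that of the k-sets (size k-1), its join that of the (k+1)-sets
   (size k+2). *)
Lemma path4_span u0 u1 u2 u3 : jpath k [:: u0; u1; u2; u3] ->
  #|meet_all [:: u0; u1; u2; u3]| = k.-1 /\ #|join_all [:: u0; u1; u2; u3]| = k.+2.
Proof.
rewrite /jpath /meet_all /join_all !big_cons !big_nil setIT setU0 /= !inE !negb_or.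
case/and3P => /andP [/orP [u0_1 | u0_2] _] /and3P [/and3P [_ d02 _] /andP [_ d13] _].
  case/and4P => a01 a12 a23 _.
  case/andP: (jadj_V1 u0_1 a01) => u1_2 s01.
  case/andP: (jadj_V2 u1_2 a12) => u2_1 s21.
  case/andP: (jadj_V1 u2_1 a23) => u3_2 s23.
  rewrite (setIidPl s23) (setIidPr s21).
  rewrite (setUidPr s23) setUA (setUidPr s01); split.
    exact: card_setI_of_subsets s01 s21 (eqP u0_1) (eqP u2_1) (eqP u1_2) d02.
  exact: card_setU_of_supsets s21 s23 (eqP u2_1) (eqP u1_2) (eqP u3_2) d13.
case/and4P => a01 a12 a23 _.
case/andP: (jadj_V2 u0_2 a01) => u1_1 s10.
case/andP: (jadj_V1 u1_1 a12) => u2_2 s12.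
case/andP: (jadj_V2 u2_2 a23) => u3_1 s32.
rewrite (setIidPr s32) (setIidPr (subset_trans (subsetIl _ _) s10)).
rewrite (setUidPl s32) (setUidPr s12); split.
  exact: card_setI_of_subsets s12 s32 (eqP u1_1) (eqP u3_1) (eqP u2_2) d13.
exact: card_setU_of_supsets s10 s12 (eqP u1_1) (eqP u0_2) (eqP u2_2) d02.
Qed.

End PathSpans.

Theorem proposition2p1 (n k : nat) (hk : 1 <= k) (hn : 2 * k + 1 <= n)
    (U : seq {set 'I_n}) (hU : jpath k U) :
  (size U = 4 -> num_six_cycles k U = 1) /\
  (size U = 3 -> inV1 k (nth set0 U 2) -> num_six_cycles k U = n - k - 1) /\
  (size U = 3 -> inV2 k (nth set0 U 2) -> num_six_cycles k U = k) /\
  (size U = 2 -> num_six_cycles k U = k * (n - k - 1)).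
Proof.
have le_k2n : k.+2 <= n by lia.
rewrite (num_six_cycles_pairs hk hU) (card_interval_pairs _ le_k2n).
have binom_k : 'C(k, k.-1) = k by rewrite -{1}(prednK hk) binSn prednK.
have binom_nk : 'C(n - k.+1, n - k.+2) = n - k - 1.
  by rewrite (_ : n - k.+1 = (n - k.+2).+1) ?binSn; lia.
case: U hU => [|u0 [|u1 [|u2 [|u3 [|u4 U]]]]] // hU; do ?split => //=.
- by move=> _; have [-> ->] := path2_span hU; rewrite binom_k binom_nk.
- by move=> _ u2_1; have [-> ->] := path3_V1_span hU u2_1; rewrite binn binom_nk mul1n.
- by move=> _ u2_2; have [-> ->] := path3_V2_span hU u2_2; rewrite binom_k binn muln1.
- by move=> _; have [-> ->] := path4_span hU; rewrite !binn.
Qed.
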